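(* Let $X$ be a compact locale with frame presentation $\mathcal{O}X=\langle G\mid R\rangle$ and quotient frame homomorphism $\overline{q}\colon\mathcal{O}(\Sigma^G)\to\mathcal{O}X$. Let $m\in\mathcal{O}(\Sigma^G)$ be a machine, $m=\bigvee_{i\in I}\bigwedge_{j\in J_i}g_j$ with each $J_i$ a finite set of generators. Then $\overline{q}(m)=1$ in $\mathcal{O}X$ (i.e. $m$ halts on all of $X$) if and only if there exists a finite set $S$ of finite subsets of $G$ such that $\bigvee_{F\in S}\bigwedge_{g\in F}g=1$ in $\mathcal{O}X$ and $m\in{\boxtimes}F$ for every $F\in S$. (Equivalently, the procedure which in parallel searches over all finite sets $S$ of finite subsets of $G$, and for each $S$ with $\bigvee_{F\in S}\bigwedge F=1$ in $\mathcal{O}X$ tests $m\in{\boxtimes}F$ for all $F\in S$ and halts if all tests succeed, halts on $m$ exactly when $m$ covers $X$.)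
   Context: Frames are complete lattices with finite meets distributing over arbitrary joins; a locale $X$ is a frame $\mathcal{O}X$. A locale is compact if whenever $\bigvee_{i\in I}u_i=1$ there is a finite $F\subseteq I$ with $\bigvee_{i\in F}u_i=1$. For a set $G$, $\mathcal{O}(\Sigma^G)$ is the free frame on $G$; its elements (''machines'') are formal joins $\bigvee_{i\in I}\bigwedge_{j\in J_i}g_j$ of finite formal meets of generators. A presentation $\mathcal{O}X=\langle G\mid R\rangle$ means $\mathcal{O}X$ is the quotient of the free frame on $G$ by the frame congruence generated by $R$, with quotient map $\overline{q}$. For $U\subseteq G$, ${\boxtimes}U$ is the Scott-open set of machines $m$ such that $m$ has a branch all of whose generators lie in $U$; i.e. $m\in{\boxtimes}U$ iff there is a finite $J\subseteq U$ with $\bigwedge_{g\in J}g\le m$ in $\mathcal{O}(\Sigma^G)$. *)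

From Stdlib Require Import List.
Import ListNotations.
Set Implicit Arguments.

Record Frame := {
  car :> Type;
  le : car -> car -> Prop;
  top : car;
  meet : car -> car -> car;
  join : (car -> Prop) -> car;
  le_refl : forall x, le x x;
  le_trans : forall x y z, le x y -> le y z -> le x z;
  le_antisym : forall x y, le x y -> le y x -> x = y;
  top_max : forall x, le x top;
  meet_glb : forall x y z, le z (meet x y) <-> (le z x /\ le z y);
  join_lub : forall (A : car -> Prop) z, le (join A) z <-> (forall x, A x -> le x z);
  meet_join_distr : forall x (A : car -> Prop),
      meet x (join A) = join (fun y => exists a, A a /\ y = meet x a)
}.

Definition fjoin (X : Frame) (I : Type) (u : I -> X) : X :=
  join X (fun y => exists i, y = u i).

Definition lmeet (X : Frame) (l : list X) : X := fold_right (meet X) (top X) l.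

Definition compact (X : Frame) : Prop :=
  forall (I : Type) (u : I -> X), @fjoin X I u = top X ->
    exists F : list I, @fjoin X {i : I | In i F} (fun i : {i : I | In i F} => u (proj1_sig i)) = top X.

(** * The free frame O(Sigma^G) on a set G.
    Standard model: a "machine" is an up-closed set of finite subsets of G
    (finite subsets = lists, compared by inclusion); the machine
    \/_{i} /\_{g in J_i} g is the up-closure of the family (J_i). *)
Definition upclosed (G : Type) (m : list G -> Prop) : Prop :=
  forall J J', m J -> incl J J' -> m J'.

Definition machine (G : Type) := { m : list G -> Prop | upclosed m }.

Definition mle (G : Type) (a b : machine G) : Prop :=
  forall J, proj1_sig a J -> proj1_sig b J.

Lemma upclosed_gen (G : Type) (g : G) : upclosed (fun J : list G => In g J).
Proof. intros J J' H Hi; apply Hi; exact H. Qed.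
Definition mgen (G : Type) (g : G) : machine G := exist _ _ (upclosed_gen g).

Lemma upclosed_top (G : Type) : upclosed (fun _ : list G => True).
Proof. intros J J' _ _; exact I. Qed.
Definition mtop (G : Type) : machine G := exist _ _ (@upclosed_top G).

Lemma upclosed_meet (G : Type) (a b : machine G) :
  upclosed (fun J => proj1_sig a J /\ proj1_sig b J).
Proof.
  destruct a as [a Ha], b as [b Hb]; simpl; intros J J' [H1 H2] Hi.
  split; [exact (Ha _ _ H1 Hi) | exact (Hb _ _ H2 Hi)].
Qed.
Definition mmeet (G : Type) (a b : machine G) : machine G :=
  exist _ _ (upclosed_meet a b).

Lemma upclosed_join (G : Type) (A : machine G -> Prop) :
  upclosed (fun J => exists a, A a /\ proj1_sig a J).
Proof.
  intros J J' [a [HA Ha]] Hi; exists a; split; [exact HA|].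
  exact (proj2_sig a _ _ Ha Hi).
Qed.
Definition mjoin (G : Type) (A : machine G -> Prop) : machine G :=
  exist _ _ (upclosed_join A).

Definition mfin (G : Type) (J : list G) : machine G :=
  fold_right (@mmeet G) (@mtop G) (map (@mgen G) J).

(** boxtimes U (for U given as a finite list): machines m having a branch all of
    whose generators lie in U, i.e. some finite J within U with /\J <= m. *)
Definition boxtimes (G : Type) (U : list G) (m : machine G) : Prop :=
  exists J : list G, incl J U /\ mle (mfin J) m.

Definition frame_congruence (G : Type) (C : machine G -> machine G -> Prop) : Prop :=
  (forall a, C a a) /\ (forall a b, C a b -> C b a) /\
  (forall a b c, C a b -> C b c -> C a c) /\
  (forall a a' b b', C a a' -> C b b' -> C (mmeet a b) (mmeet a' b')) /\
  (forall A B : machine G -> Prop,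
      (forall a, A a -> exists b, B b /\ C a b) ->
      (forall b, B b -> exists a, A a /\ C a b) ->
      C (mjoin A) (mjoin B)).

Definition cong_gen (G : Type) (R : machine G -> machine G -> Prop)
  (a b : machine G) : Prop :=
  forall C, frame_congruence C -> (forall x y, R x y -> C x y) -> C a b.

Definition frame_hom_from_free (G : Type) (X : Frame) (q : machine G -> X) : Prop :=
  q (@mtop G) = top X /\
  (forall a b, q (mmeet a b) = meet X (q a) (q b)) /\
  (forall A : machine G -> Prop, q (mjoin A) = join X (fun y => exists a, A a /\ y = q a)).

Definition presents (G : Type) (R : machine G -> machine G -> Prop)
  (X : Frame) (q : machine G -> X) : Prop :=
  @frame_hom_from_free G X q /\
  (forall x : X, exists a, q a = x) /\
  (forall a b, q a = q b <-> cong_gen R a b).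

(* A machine is the join of the finite meets of its branches.  If [q m = 1],
   compactness of [X] extracts finitely many branches [J] whose meets already
   cover [X]; each such [J] lies in [⊠J].  Conversely, [m ∈ ⊠F] gives
   [/\F <= /\J <= m] for some branch [J], so a cover by such meets forces
   [q m = 1]. *)
From Stdlib Require Import List.
From Stdlib Require Import FunctionalExtensionality PropExtensionality ProofIrrelevance.

Lemma machine_ext (G : Type) (a b : machine G) :
  (forall J, proj1_sig a J <-> proj1_sig b J) -> a = b.
Proof.
  destruct a as [a Ha], b as [b Hb]; simpl; intros Hab.
  assert (a = b) as <-.
  { apply functional_extensionality; intro J; apply propositional_extensionality; auto. }
  f_equal; apply proof_irrelevance.
Qed.

Lemma join_ext (X : Frame) (A B : X -> Prop) :
  (forall y, A y <-> B y) -> join X A = join X B.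
Proof.
  intros HAB; f_equal.
  apply functional_extensionality; intro y; apply propositional_extensionality; auto.
Qed.

Lemma top_of_join_le {X : Frame} {A : X -> Prop} {x : X} :
  join X A = top X -> (forall y, A y -> le X y x) -> x = top X.
Proof.
  intros HA Hle; apply le_antisym; [apply top_max|].
  rewrite <- HA; apply join_lub; exact Hle.
Qed.

Section FreeFrame.

Context {G : Type}.

Lemma in_mfin (J K : list G) : proj1_sig (mfin J) K <-> incl J K.
Proof.
  induction J as [|g J IH]; simpl.
  - split; [intros _ x []| auto].
  - split.
    + intros [Hg HJ] x [<-|Hx]; [exact Hg | apply IH; auto].
    + intros Hi; split; [apply Hi; left; auto | apply IH; intros x Hx; apply Hi; right; auto].
Qed.

Lemma mle_mfin {J K : list G} : incl J K -> mle (mfin K) (mfin J).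
Proof.
  intros HJK L HL; apply in_mfin; apply in_mfin in HL; eapply incl_tran; eauto.
Qed.

Lemma mle_mfin_branch {m : machine G} {J : list G} : proj1_sig m J -> mle (mfin J) m.
Proof. intros HJ K HK; apply in_mfin in HK; exact (proj2_sig m _ _ HJ HK). Qed.

Lemma machine_join_branches (m : machine G) :
  m = mjoin (fun a => exists J, proj1_sig m J /\ a = mfin J).
Proof.
  apply machine_ext; intro K; simpl; split.
  - intros HK; exists (mfin K); split; [eauto | apply in_mfin, incl_refl].
  - intros [a [[J [HJ ->]] HK]]; exact (mle_mfin_branch HJ K HK).
Qed.

Lemma boxtimes_branch {m : machine G} {J : list G} : proj1_sig m J -> boxtimes J m.
Proof. intros HJ; exists J; split; [apply incl_refl | exact (mle_mfin_branch HJ)]. Qed.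

Context {X : Frame} {q : machine G -> X}.
Hypothesis q_hom : frame_hom_from_free X q.

Lemma hom_mfin (J : list G) : q (mfin J) = lmeet X (map (fun g => q (mgen g)) J).
Proof.
  destruct q_hom as [q_top [q_meet _]].
  induction J as [|g J IH]; [exact q_top|].
  unfold mfin in *; simpl; rewrite q_meet, IH; reflexivity.
Qed.

Lemma hom_mono (a b : machine G) : mle a b -> le X (q a) (q b).
Proof.
  intros Hab; destruct q_hom as [_ [q_meet _]].
  assert (Hmeet : mmeet a b = a).
  { apply machine_ext; intro J; simpl; split; [tauto | intros Ha; split; auto]. }
  rewrite <- Hmeet, q_meet; apply (proj1 (meet_glb X _ _ _) (le_refl X _)).
Qed.

Lemma hom_machine_fjoin (m : machine G) :
  q m = @fjoin X _ (fun J : {J | proj1_sig m J} => q (mfin (proj1_sig J))).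
Proof.
  destruct q_hom as [_ [_ q_join]].
  rewrite (machine_join_branches m) at 1; rewrite q_join; apply join_ext; intro y; split.
  - intros [a [[J [HJ ->]] ->]]; exists (exist _ J HJ); reflexivity.
  - intros [[J HJ] ->]; exists (mfin J); split; [eauto | reflexivity].
Qed.

Lemma boxtimes_le {F : list G} {m : machine G} :
  boxtimes F m -> le X (lmeet X (map (fun g => q (mgen g)) F)) (q m).
Proof.
  intros [J [HJF HJ]]; rewrite <- hom_mfin.
  apply le_trans with (q (mfin J)); apply hom_mono; [exact (mle_mfin HJF) | exact HJ].
Qed.

End FreeFrame.

Theorem theorem4p1 (G : Type) (R : machine G -> machine G -> Prop)
  (X : Frame) (q : machine G -> X)
  (Hpres : presents R X q) (Hcomp : compact X) (m : machine G) :
  q m = top X <->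
  exists S : list (list G),
    join X (fun y => exists F, In F S /\ y = @lmeet X (map (fun g => q (mgen g)) F)) = top X /\
    (forall F, In F S -> boxtimes F m).
Proof.
  destruct Hpres as [q_hom _]; split.
  - intros Hq; rewrite (hom_machine_fjoin q_hom) in Hq.
    destruct (Hcomp _ _ Hq) as [B HB].
    exists (map (@proj1_sig _ _) B); split.
    + rewrite <- HB; apply join_ext; intro y; split.
      * intros [F [HF ->]]; apply in_map_iff in HF as [J [<- HJ]].
        exists (exist _ J HJ); symmetry; apply (hom_mfin q_hom).
      * intros [[J HJ] ->]; exists (proj1_sig J).
        split; [apply in_map; exact HJ | apply (hom_mfin q_hom)].
    + intros F HF; apply in_map_iff in HF as [[J HJ] [<- _]].
      exact (boxtimes_branch HJ).
  - intros [S [HS Hbox]]; apply (top_of_join_le HS).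
    intros y [F [HF ->]]; exact (boxtimes_le q_hom (Hbox F HF)).
Qed.
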